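(* Let $A$ be a synaptic algebra, $p,q\in P$, $c:=(pqp+p^{\perp}q^{\perp}p^{\perp})^{1/2}$ and $s:=(pq^{\perp}p+p^{\perp}qp^{\perp})^{1/2}$. Then: (i) $(s^{\circ})^{\perp}p=p(s^{\circ})^{\perp}=(s^{\circ})^{\perp}q=q(s^{\circ})^{\perp}=(s^{\circ})^{\perp}\wedge p=(s^{\circ})^{\perp}\wedge q=p\wedge q$; (ii) $(c^{\circ})^{\perp}p=p(c^{\circ})^{\perp}=(c^{\circ})^{\perp}q^{\perp}=q^{\perp}(c^{\circ})^{\perp}=(c^{\circ})^{\perp}\wedge p=(c^{\circ})^{\perp}\wedge q^{\perp}=p\wedge q^{\perp}$; (iii) $(c^{\circ})^{\perp}p^{\perp}=p^{\perp}(c^{\circ})^{\perp}=(c^{\circ})^{\perp}q=q(c^{\circ})^{\perp}=(c^{\circ})^{\perp}\wedge p^{\perp}=(c^{\circ})^{\perp}\wedge q=p^{\perp}\wedge q$; (iv) $(s^{\circ})^{\perp}p^{\perp}=p^{\perp}(s^{\circ})^{\perp}=(s^{\circ})^{\perp}q^{\perp}=q^{\perp}(s^{\circ})^{\perp}=(s^{\circ})^{\perp}\wedge p^{\perp}=(s^{\circ})^{\perp}\wedge q^{\perp}=p^{\perp}\wedge q^{\perp}$.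
   Context: Synaptic algebra (Foulis): $R$ is a real linear associative algebra with unit $1$, and $A\subseteq R$ is a real linear subspace with $1\in A$. For $a,b\in A$ write $aCb$ iff $ab=ba$; $C(a):=\{b\in A: aCb\}$; $CC(a):=\{b\in A: bCd \text{ for all } d\in C(a)\}$. $A$ is a synaptic algebra with enveloping algebra $R$ iff: (SA1) $A$ is a partially ordered archimedean real linear space with positive cone $A^+$, $1$ is an order unit, $\|\cdot\|$ the order-unit norm; (SA2) $a\in A\Rightarrow a^2\in A^+$; (SA3) $a,b\in A^+\Rightarrow aba\in A^+$; (SA4) if $a\in A$, $b\in A^+$, $aba=0$ then $ab=ba=0$; (SA5) if $a\in A^+$ there is $b\in A^+\cap CC(a)$ with $b^2=a$; (SA6) for $a\in A$ there is $p=p^2\in A$ with $ab=0\Leftrightarrow pb=0$ for all $b\in A$; (SA7) if $1\le a$ there is $b\in A$ with $ab=ba=1$; (SA8) if $a,b\in A$, $a_1\le a_2\le\cdots$ are pairwise commuting elements of $C(b)$ with $\|a-a_n\|\to0$, then $a\in C(b)$. $A$ is nondegenerate. $P:=\{p\in A:p=p^2\}$ with the inherited order is an orthomodular lattice with $p^{\perp}:=1-p$, meet $\wedge$, join $\vee$. For $0\le a$, $a^{1/2}$ is its unique positive square root in $A$. The carrier $a^{\circ}$ of $a\in A$ is the unique projection such that for all $b\in A$, $ab=0\Leftrightarrow a^{\circ}b=0$. *)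

From HB Require Import structures.
From mathcomp Require Import all_boot all_order all_algebra.
From mathcomp Require Import boolp classical_sets reals.
Set Implicit Arguments. Unset Strict Implicit. Unset Printing Implicit Defensive.
Import Order.TTheory GRing.Theory Num.Theory.
Local Open Scope ring_scope.
Local Open Scope classical_set_scope.

Section SynapticDefs.
Variables (R : realType) (E : algType R).
(* A : the underlying subspace of the enveloping algebra E,
   pos : the positive cone A^+. *)
Variables (A pos : set E).

Definition sa_le (a b : E) : Prop := pos (b - a).

Definition sa_C (a : E) : set E := [set b | A b /\ a * b = b * a].
Definition sa_CC (a : E) : set E :=
  [set b | A b /\ forall d, sa_C a d -> b * d = d * b].

Definition sa_norm (a : E) : R :=
  inf [set l : R | 0 <= l /\ sa_le (- (l *: 1)) a /\ sa_le a (l *: 1)].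

Record synaptic : Prop := Synaptic {
  sa_A0 : A 0;
  sa_A1 : A 1;
  sa_Alin : forall (k : R) a b, A a -> A b -> A (k *: a + b);
  (* SA1 : partially ordered (by the cone pos) archimedean real linear space,
     1 an order unit *)
  sa_posA : forall a, pos a -> A a;
  sa_pos0 : pos 0;
  sa_posD : forall a b, pos a -> pos b -> pos (a + b);
  sa_posZ : forall (k : R) a, 0 <= k -> pos a -> pos (k *: a);
  sa_posN : forall a, pos a -> pos (- a) -> a = 0;
  sa_archi : forall a b, A a -> A b ->
      (forall n : nat, sa_le (n%:R *: a) b) -> sa_le a 0;
  sa_unit : forall a, A a ->
      exists n : nat, sa_le (- (n%:R *: 1)) a /\ sa_le a (n%:R *: 1);
  sa_sq : forall a, A a -> pos (a * a);
  sa_aba : forall a b, pos a -> pos b -> pos (a * b * a);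
  sa_aba0 : forall a b, A a -> pos b -> a * b * a = 0 -> a * b = 0 /\ b * a = 0;
  sa_sqrt : forall a, pos a -> exists b, pos b /\ sa_CC a b /\ b * b = a;
  sa_carrier : forall a, A a -> exists p, A p /\ p * p = p /\
      (forall b, A b -> (a * b = 0 <-> p * b = 0));
  sa_inv : forall a, A a -> sa_le 1 a -> exists b, A b /\ a * b = 1 /\ b * a = 1;
  sa_mono : forall a b (an : nat -> E), A a -> A b ->
      (forall n, A (an n)) ->
      (forall n, sa_le (an n) (an n.+1)) ->
      (forall m n, an m * an n = an n * an m) ->
      (forall n, sa_C b (an n)) ->
      (forall eps : R, 0 < eps -> exists N, forall n, (N <= n)%N ->
            sa_norm (a - an n) < eps) ->
      sa_C b a;
  sa_nondeg : (1 : E) <> 0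
}.

Definition sa_proj (p : E) : Prop := A p /\ p * p = p.
Definition sa_perp (p : E) : E := 1 - p.

Definition sa_meet (p q : E) : E :=
  xget 0 [set r | sa_proj r /\ sa_le r p /\ sa_le r q /\
     forall t, sa_proj t -> sa_le t p -> sa_le t q -> sa_le t r].

Definition sa_sqrtA (a : E) : E := xget 0 [set b | pos b /\ b * b = a].

Definition sa_carr (a : E) : E :=
  xget 0 [set p | sa_proj p /\ forall b, A b -> (a * b = 0 <-> p * b = 0)].

End SynapticDefs.

From HB Require Import structures.
From mathcomp Require Import all_boot all_order all_algebra.
From mathcomp Require Import boolp classical_sets reals.
Import Order.TTheory GRing.Theory Num.Theory.
Local Open Scope ring_scope.

(* Both squares are squares of differences of projections:
   s^2 = p q^⊥ p + p^⊥ q p^⊥ = (p - q)^2 and c^2 = (p - q^⊥)^2.  A positive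
   element has the same annihilator as its square, so e := (s°)^⊥ is the
   projection onto the kernel of D := (p - q)^2.  The carrier of D commutes
   with everything that commutes with D, in particular with p and q, and
   ((p - q) e)^2 = D e = 0 forces p e = q e.  Every projection killed by
   p - q lies below e, which identifies p e = q e with p ∧ q and
   p^⊥ e = q^⊥ e with p^⊥ ∧ q^⊥.  Replacing q by q^⊥ gives (ii) and (iii). *)

Lemma addr_pull (V : zmodType) (u a r r1 : V) :
  r = a + r1 -> u + r = a + (u + r1).
Proof. by move=> ->; rewrite addrCA. Qed.

Lemma addr_pull_last (V : zmodType) (a : V) : a = a + 0.
Proof. by rewrite addr0. Qed.

Lemma addr_cancel (V : zmodType) (a r r' : V) :
  r = - a + r' -> r' = 0 -> a + r = 0.
Proof. by move=> -> ->; rewrite addr0 addrN. Qed.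

Lemma addr_cancelN (V : zmodType) (b r r' : V) :
  r = b + r' -> r' = 0 -> - b + r = 0.
Proof. by move=> -> ->; rewrite addr0 addNr. Qed.

(* [nc_ring] proves an identity [x = y] in a noncommutative ring: it expands
   [x - y] into a right-nested sum of left-nested monomials and cancels each
   summand against an opposite one found further along the sum.  The variant
   [nc_ring_by simp] runs [simp] on the expanded monomials first, typically to
   collapse idempotents. *)
Ltac nc_expand := rewrite ?(mulrDl, mulrDr, mulrBl, mulrBr, mulNr, mulrN,
  opprD, opprK, opprB, mulrA, mul1r, mulr1, mul0r, mulr0, addr0, add0r, oppr0).
Ltac nc_pull := first [ reflexivity | eapply addr_pull; nc_pull
                      | eapply addr_pull_last ].
Ltac nc_cancel := match goal with
 | |- 0 = 0 => reflexivity
 | |- - ?b + ?r = 0 => eapply (@addr_cancelN _ b); [nc_pull | nc_cancel]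
 | |- ?a + ?r = 0 => eapply (@addr_cancel _ a); [nc_pull | nc_cancel]
 end.
Ltac nc_ring_by simp :=
  apply: subr0_eq; nc_expand; simp; nc_expand; rewrite -?addrA; nc_cancel.
Ltac nc_ring := nc_ring_by idtac.

Definition proj_le {T : pzRingType} (t p : T) := t * p = t /\ p * t = t.

Section ProjectionIdentities.
Context {R : realType} {E : algType R}.

Lemma sa_perpK (x : E) : sa_perp (sa_perp x) = x.
Proof. exact: subKr. Qed.

Lemma commute_perp {x f : E} : x * f = f * x -> x * sa_perp f = sa_perp f * x.
Proof. by move=> xf; rewrite /sa_perp mulrBr mulrBl xf mulr1 mul1r. Qed.

Lemma perp_mul_idem {p : E} : p * p = p -> sa_perp p * p = 0.
Proof. by move=> pp; rewrite /sa_perp mulrBl pp mul1r subrr. Qed.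

Lemma mul_perp_idem {p : E} : p * p = p -> p * sa_perp p = 0.
Proof. by move=> pp; rewrite /sa_perp mulrBr pp mulr1 subrr. Qed.

Context {p q : E}.
Hypotheses (pp : p * p = p) (qq : q * q = q).

Lemma mulr_idem_p (x : E) : x * p * p = x * p.
Proof. by rewrite -mulrA pp. Qed.

Lemma mulr_idem_q (x : E) : x * q * q = x * q.
Proof. by rewrite -mulrA qq. Qed.

Lemma sqr_proj_diff :
  (p - q) * (p - q) = p * sa_perp q * p + sa_perp p * q * sa_perp p.
Proof.
by rewrite /sa_perp; nc_ring_by
  ltac:(rewrite ?(mulr_idem_p, mulr_idem_q, pp, qq)).
Qed.

Lemma proj_commute_sqr_diff : p * ((p - q) * (p - q)) = (p - q) * (p - q) * p.
Proof. by nc_ring_by ltac:(rewrite ?(mulr_idem_p, mulr_idem_q, pp, qq)). Qed.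

End ProjectionIdentities.

Section Synaptic.
Context {R : realType} {E : algType R} {A pos : set E}.
Hypothesis HA : synaptic A pos.

Lemma A_add {a b} : A a -> A b -> A (a + b).
Proof. by move=> Aa Ab; have := sa_Alin HA 1 Aa Ab; rewrite scale1r. Qed.

Lemma A_scale (k : R) {a} : A a -> A (k *: a).
Proof. by move=> Aa; have := sa_Alin HA k Aa (sa_A0 HA); rewrite addr0. Qed.

Lemma A_sub {a b} : A a -> A b -> A (a - b).
Proof.
by move=> Aa Ab; apply: A_add => //; rewrite -scaleN1r; apply: A_scale.
Qed.

Lemma A_sqr {a} : A a -> A (a * a).
Proof. by move=> Aa; apply: (sa_posA HA); apply: (sa_sq HA). Qed.

Lemma A_jordan {a b} : A a -> A b -> A (a * b + b * a).
Proof.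
move=> Aa Ab.
have -> : a * b + b * a = (a + b) * (a + b) - a * a - b * b by nc_ring.
by do 2?apply: A_sub; apply: A_sqr => //; apply: A_add.
Qed.

Lemma A_quad {a b} : A a -> A b -> A (a * b * a).
Proof.
move=> Aa Ab.
have A2 : A ((a * b * a) *+ 2).
  have -> : (a * b * a) *+ 2 =
      a * (a * b + b * a) + (a * b + b * a) * a - (a * a * b + b * (a * a)).
    by rewrite mulr2n; nc_ring.
  by apply: A_sub; apply: A_jordan => //; [apply: A_jordan | apply: A_sqr].
have := A_scale 2^-1 A2.
by rewrite -scaler_nat scalerA mulVf ?scale1r // pnatr_eq0.
Qed.

Lemma pos1 : pos 1.
Proof. by have := sa_sq HA (sa_A1 HA); rewrite mulr1. Qed.

Lemma sqr_eq0 {a} : A a -> a * a = 0 -> a = 0.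
Proof.
move=> Aa aa0; have [] := sa_aba0 HA Aa pos1; first by rewrite mulr1.
by rewrite mulr1.
Qed.

(* Once [x y x = 0], the Jordan product [j = x y + y x] satisfies
   [j^2 = x y^2 x] and [j^4 = 0]; so [j = 0], whence [x y^2 = 0] and
   [y x y = - x y^2 = 0]. *)
Lemma pos_sqr_mul_eq0 {x y} : pos x -> A y -> x * x * y = 0 -> x * y = 0.
Proof.
move=> px Ay xxy0; have Ax := sa_posA HA px.
have yxx0 : y * x * x = 0.
  have [] := sa_aba0 HA Ay (sa_sq HA Ax); last by rewrite mulrA.
  by rewrite -mulrA xxy0 mulr0.
have xxyz0 z : z * x * x * y = 0 by rewrite -!mulrA (mulrA x) xxy0 mulr0.
have xyx0 : x * y * x = 0.
  by apply: sqr_eq0; [apply: A_quad | rewrite !mulrA xxyz0 !mul0r].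
have xyxz0 z : z * x * y * x = 0 by rewrite -!mulrA (mulrA x) xyx0 mulr0.
pose j := x * y + y * x.
have jj : j * j = x * y * y * x.
  by rewrite !(mulrDl, mulrDr) !mulrA xyx0 xyxz0 yxx0 !mul0r !add0r addr0.
have j0 : j = 0.
  apply: sqr_eq0; first exact: A_jordan.
  by apply: sqr_eq0; [apply/A_sqr/A_jordan | rewrite jj !mulrA xxyz0 !mul0r].
have xyy0 : x * (y * y) = 0.
  have [] := sa_aba0 HA Ax (sa_sq HA Ay) => //.
  by rewrite mulrA -jj j0 mulr0.
have yxy0 : y * x * y = 0.
  have yx : y * x = - (x * y) by apply/eqP; rewrite -addr_eq0 addrC -/j j0.
  by rewrite yx mulNr -mulrA xyy0 oppr0.
by have [] := sa_aba0 HA Ay px yxy0.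
Qed.

Lemma pos_proj {p} : sa_proj A p -> pos p.
Proof. by case=> Ap pp; have := sa_sq HA Ap; rewrite pp. Qed.

Lemma proj_perp {p} : sa_proj A p -> sa_proj A (sa_perp p).
Proof.
case=> Ap pp; split; first exact: (A_sub (sa_A1 HA) Ap).
by rewrite /sa_perp; nc_ring_by ltac:(rewrite ?pp).
Qed.

Lemma proj_mul {a e} : sa_proj A a -> sa_proj A e -> a * e = e * a ->
  sa_proj A (a * e).
Proof.
move=> [Aa aa] [Ae ee] ae; split.
  have -> : a * e = e * a * e by rewrite -ae -mulrA ee.
  exact: A_quad.
by rewrite -mulrA (mulrA e) -ae -mulrA ee mulrA aa.
Qed.

Lemma proj_leP {t p} : sa_proj A t -> sa_proj A p ->
  sa_le pos t p <-> proj_le t p.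
Proof.
move=> Pt Pp; split=> [le_tp | [tp pt]].
  have Pp' := proj_perp Pp.
  have neg : pos (- (sa_perp p * t * sa_perp p)).
    have := sa_aba HA (pos_proj Pp') le_tp.
    by rewrite [_ * (p - t)]mulrBr perp_mul_idem ?Pp.2 // sub0r mulNr.
  have [tp' pt'] := sa_aba0 HA Pp'.1 (pos_proj Pt)
    (sa_posN HA (sa_aba HA (pos_proj Pp') (pos_proj Pt)) neg).
  split; apply/eqP; rewrite eq_sym -subr_eq0.
    by rewrite -{1}(mulr1 t) -mulrBr pt'.
  by rewrite -{1}(mul1r t) -mulrBl tp'.
rewrite /sa_le; have -> : p - t = (p - t) * (p - t).
  by nc_ring_by ltac:(rewrite ?(Pt.2, Pp.2, tp, pt)).
by have := sa_sq HA (A_sub Pp.1 Pt.1).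
Qed.

Lemma meet_eq {a b m} : sa_proj A a -> sa_proj A b -> sa_proj A m ->
  proj_le m a -> proj_le m b ->
  (forall t, sa_proj A t -> proj_le t a -> proj_le t b -> proj_le t m) ->
  sa_meet A pos a b = m.
Proof.
move=> Pa Pb Pm ma mb m_glb.
have glb t : sa_proj A t -> sa_le pos t a -> sa_le pos t b -> sa_le pos t m.
  move=> Pt /(proj_leP Pt Pa) ta /(proj_leP Pt Pb) tb.
  exact/(proj_leP Pt Pm)/m_glb.
apply: xget_unique.
  by split=> //; split; [apply/proj_leP | split; [apply/proj_leP | ]].
move=> y [Py [ya [yb y_glb]]].
apply/esym/subr0_eq/(sa_posN HA (glb y Py ya yb)).
by rewrite opprB; apply: y_glb => //; apply/proj_leP.
Qed.

Lemma meet_commuting {a e} : sa_proj A a -> sa_proj A e -> a * e = e * a ->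
  sa_meet A pos e a = a * e.
Proof.
move=> Pa Pe ae; have [_ aa] := Pa; have [_ ee] := Pe.
apply: meet_eq => //; first exact: proj_mul.
- by split; [rewrite -mulrA ee | rewrite mulrA -ae -mulrA ee].
- by split; [rewrite -mulrA -ae mulrA aa | rewrite mulrA aa].
- move=> t _ [te et] [ta a_t].
  by split; [rewrite mulrA ta te | rewrite -mulrA et a_t].
Qed.

Lemma commuting_proj_meet {a b e} :
  sa_proj A a -> sa_proj A b -> sa_proj A e ->
  a * e = e * a -> b * e = e * b -> a * e = b * e ->
  (forall t, sa_proj A t -> proj_le t a -> proj_le t b -> proj_le t e) ->
  let M := sa_meet A pos a b in
  e * a = M /\ a * e = M /\ e * b = M /\ b * e = M /\
  sa_meet A pos e a = M /\ sa_meet A pos e b = M.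
Proof.
move=> Pa Pb Pe ae be abe e_ub M; have [_ aa] := Pa; have [_ bb] := Pb.
have -> : M = a * e.
  apply: meet_eq => //; first exact: proj_mul.
  - by split; [rewrite -mulrA -ae mulrA aa | rewrite mulrA aa].
  - by split; [rewrite abe -mulrA -be mulrA bb | rewrite abe mulrA bb].
  - move=> t Pt ta tb; have [te et] := e_ub t Pt ta tb; case: ta => ta a_t.
    by split; [rewrite mulrA ta te | rewrite -mulrA et a_t].
by rewrite !meet_commuting // -ae -be abe.
Qed.

Definition is_carrier a f :=
  sa_proj A f /\ forall b, A b -> (a * b = 0 <-> f * b = 0).

Lemma sa_carrP {a} : A a -> is_carrier a (sa_carr A a).
Proof.
move=> Aa; have [f [Af [ff af]]] := sa_carrier HA Aa.
exact: (xgetPex 0 (ex_intro _ f (conj (conj Af ff) af))).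
Qed.

Lemma sa_sqrtAP {a} : pos a ->
  pos (sa_sqrtA pos a) /\ sa_sqrtA pos a * sa_sqrtA pos a = a.
Proof.
move=> pa; have [b [pb [_ bb]]] := sa_sqrt HA pa.
exact: (@xgetPex _ 0 [set b | pos b /\ b * b = a] (ex_intro _ b (conj pb bb))).
Qed.

Lemma is_carrier_sqr {x f} : pos x -> is_carrier x f -> is_carrier (x * x) f.
Proof.
move=> px [Pf xf]; split=> // b Ab; rewrite -xf //; split.
  exact: pos_sqr_mul_eq0.
by rewrite -mulrA => ->; rewrite mulr0.
Qed.

Lemma carrier_perp_eq0 {a f} : is_carrier a f -> a * sa_perp f = 0.
Proof.
move=> [Pf af]; apply/af; first exact: (proj_perp Pf).1.
exact: mul_perp_idem Pf.2.
Qed.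

Lemma carrier_perp_ge {a f t} : is_carrier a f -> sa_proj A t -> a * t = 0 ->
  proj_le t (sa_perp f).
Proof.
move=> [Pf af] Pt at0; have ft0 : f * t = 0 by apply/af => //; exact: Pt.1.
have ftf0 : f * t * f = 0 by rewrite ft0 mul0r.
have [_ tf0] := sa_aba0 HA Pf.1 (pos_proj Pt) ftf0.
by split; rewrite /sa_perp ?mulrBr ?mulrBl ?mulr1 ?mul1r ?tf0 ?ft0 subr0.
Qed.

(* The carrier of [D] lies in the bicommutant of [D]: with [e := f^⊥] one has
   [f r e = 0], so [e r f] lies in [A] and squares to zero. *)
Lemma carrier_commute {D f r} : is_carrier D f -> A r -> r * D = D * r ->
  r * f = f * r.
Proof.
move=> Cf Ar rD; have [[Af ff] Df] := Cf; have [Ae _] := proj_perp Cf.1.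
have fe : f * sa_perp f = 0 := mul_perp_idem ff.
have De : D * sa_perp f = 0 := carrier_perp_eq0 Cf.
have ef1 : sa_perp f + f = 1 by rewrite subrK.
move: (sa_perp f) Ae fe De ef1 => e Ae fe De ef1.
have fre : f * r * e = 0.
  have : f * (r * e + e * r) = 0.
    apply/Df; first exact: A_jordan.
    by rewrite mulrDr !mulrA De mul0r addr0 -rD -mulrA De mulr0.
  by rewrite mulrDr !mulrA fe mul0r addr0.
have erf : e * r * f = 0.
  apply: sqr_eq0; last by rewrite !mulrA -(mulrA _ f e) fe mulr0 !mul0r.
  have -> : e * r * f = (e + f) * r * (e + f) - e * r * e - f * r * f - f * r * e.
    by nc_ring.
  rewrite ef1 mul1r mulr1 fre subr0.
  by apply: A_sub; [apply: A_sub => // |]; apply: A_quad.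
have er : e * r = r * e.
  have -> : e * r = e * r * (e + f) by rewrite ef1 mulr1.
  have -> : r * e = (e + f) * r * e by rewrite ef1 mul1r.
  by rewrite mulrDr !mulrDl erf fre !addr0.
have -> : f = 1 - e by rewrite -ef1 [e + f]addrC addrK.
by rewrite mulrBl mulrBr mulr1 mul1r er.
Qed.

Lemma sqrt_proj_diff_carrier {p q} : sa_proj A p -> sa_proj A q ->
  is_carrier ((p - q) * (p - q))
    (sa_carr A (sa_sqrtA pos (p * sa_perp q * p + sa_perp p * q * sa_perp p))).
Proof.
move=> Pp Pq.
have pS : pos (p * sa_perp q * p + sa_perp p * q * sa_perp p).
  by apply: (sa_posD HA); apply: (sa_aba HA);
    apply: pos_proj => //; apply: proj_perp.
have [px xx] := sa_sqrtAP pS.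
rewrite sqr_proj_diff ?Pp.2 ?Pq.2 //.
by have := is_carrier_sqr px (sa_carrP (sa_posA HA px)); rewrite xx.
Qed.

Lemma ker_diff_meet {p q f} : sa_proj A p -> sa_proj A q ->
  is_carrier ((p - q) * (p - q)) f ->
  let e := sa_perp f in
  let M := sa_meet A pos p q in
  let N := sa_meet A pos (sa_perp p) (sa_perp q) in
  (e * p = M /\ p * e = M /\ e * q = M /\ q * e = M /\
   sa_meet A pos e p = M /\ sa_meet A pos e q = M) /\
  (e * sa_perp p = N /\ sa_perp p * e = N /\ e * sa_perp q = N /\
   sa_perp q * e = N /\ sa_meet A pos e (sa_perp p) = N /\
   sa_meet A pos e (sa_perp q) = N).
Proof.
move=> Pp Pq Cf e M N; have [[Ap pp] [Aq qq]] := (Pp, Pq).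
have Pe : sa_proj A e := proj_perp Cf.1.
have De : (p - q) * (p - q) * e = 0 := carrier_perp_eq0 Cf.
have e_ub t : sa_proj A t -> (p - q) * t = 0 -> proj_le t e.
  by move=> Pt pqt; apply: carrier_perp_ge Cf Pt _; rewrite -mulrA pqt mulr0.
have commute_e r : A r -> r * ((p - q) * (p - q)) = (p - q) * (p - q) * r ->
    r * e = e * r.
  by move=> Ar rD; apply/commute_perp/(carrier_commute Cf Ar).
clearbody e.
have pe : p * e = e * p := commute_e p Ap (proj_commute_sqr_diff pp qq).
have qe : q * e = e * q.
  apply: commute_e Aq _.
  have -> : (p - q) * (p - q) = (q - p) * (q - p) by rewrite -mulrNN !opprB.
  exact: proj_commute_sqr_diff.
have pqe : p * e = q * e.
  apply/subr0_eq; rewrite -mulrBl; apply: sqr_eq0.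
    rewrite mulrBl; apply: A_sub.
      exact: (proj_mul Pp Pe pe).1.
    exact: (proj_mul Pq Pe qe).1.
  have pqee : (p - q) * e = e * (p - q) by rewrite mulrBl mulrBr pe qe.
  by rewrite -mulrA (mulrA e) -pqee -mulrA Pe.2 mulrA De.
have p'e : sa_perp p * e = e * sa_perp p := esym (commute_perp (esym pe)).
have q'e : sa_perp q * e = e * sa_perp q := esym (commute_perp (esym qe)).
split.
  apply: (commuting_proj_meet Pp Pq Pe pe qe pqe) => t Pt [_ pt] [_ qt].
  by apply: e_ub; rewrite // mulrBl pt qt subrr.
apply: (commuting_proj_meet (proj_perp Pp) (proj_perp Pq) Pe p'e q'e).
  by rewrite /sa_perp !mulrBl pqe.
move=> t Pt [_ p't] [_ q't]; apply: e_ub => //.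
have pt : p * t = 0 by rewrite -p't mulrA mul_perp_idem // mul0r.
have qt : q * t = 0 by rewrite -q't mulrA mul_perp_idem // mul0r.
by rewrite mulrBl pt qt subrr.
Qed.

End Synaptic.

Arguments is_carrier {R E} A a f.

Theorem corollary4p5 (R : realType) (E : algType R) (A pos : set E)
  (HA : synaptic A pos) (p q : E) (Hp : sa_proj A p) (Hq : sa_proj A q) :
  let c := sa_sqrtA pos (p * q * p + sa_perp p * sa_perp q * sa_perp p) in
  let s := sa_sqrtA pos (p * sa_perp q * p + sa_perp p * q * sa_perp p) in
  let sc := sa_perp (sa_carr A s) in
  let cc := sa_perp (sa_carr A c) in
  let meet := sa_meet A pos in
  (* (i) *)
  (sc * p = meet p q /\ p * sc = meet p q /\ sc * q = meet p q /\
   q * sc = meet p q /\ meet sc p = meet p q /\ meet sc q = meet p q) /\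
  (* (ii) *)
  (cc * p = meet p (sa_perp q) /\ p * cc = meet p (sa_perp q) /\
   cc * sa_perp q = meet p (sa_perp q) /\ sa_perp q * cc = meet p (sa_perp q) /\
   meet cc p = meet p (sa_perp q) /\ meet cc (sa_perp q) = meet p (sa_perp q)) /\
  (* (iii) *)
  (cc * sa_perp p = meet (sa_perp p) q /\ sa_perp p * cc = meet (sa_perp p) q /\
   cc * q = meet (sa_perp p) q /\ q * cc = meet (sa_perp p) q /\
   meet cc (sa_perp p) = meet (sa_perp p) q /\ meet cc q = meet (sa_perp p) q) /\
  (* (iv) *)
  (sc * sa_perp p = meet (sa_perp p) (sa_perp q) /\
   sa_perp p * sc = meet (sa_perp p) (sa_perp q) /\
   sc * sa_perp q = meet (sa_perp p) (sa_perp q) /\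
   sa_perp q * sc = meet (sa_perp p) (sa_perp q) /\
   meet sc (sa_perp p) = meet (sa_perp p) (sa_perp q) /\
   meet sc (sa_perp q) = meet (sa_perp p) (sa_perp q)).
Proof.
move=> c s sc cc meet.
have Pq' := proj_perp HA Hq.
have [i iv] := ker_diff_meet HA Hp Hq (sqrt_proj_diff_carrier HA Hp Hq).
have [ii iii] := ker_diff_meet HA Hp Pq' (sqrt_proj_diff_carrier HA Hp Pq').
rewrite sa_perpK in ii iii.
by split; [exact: i | split; [exact: ii | split; [exact: iii | exact: iv]]].
Qed.
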